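(* Let $F:(0,\infty)\to(0,\infty)$ be strictly decreasing and let $(x_n)_{n\in\mathbb Z}$ be an equilibrium configuration for $F$. Suppose that some gap is maximal, i.e. there is $k\in\mathbb Z$ with $x_{k+1}-x_k\ge x_{m+1}-x_m$ for all $m\in\mathbb Z$, or that some gap is minimal, i.e. there is $k$ with $x_{k+1}-x_k\le x_{m+1}-x_m$ for all $m\in\mathbb Z$. Then the configuration is trivial, i.e. $x_{n+1}-x_n$ is independent of $n$.
   Context: A force law is a strictly decreasing function $F:(0,\infty)\to(0,\infty)$; two particles at distance $d$ repel each other with force of magnitude $F(d)$. A configuration is a strictly increasing bi-infinite sequence $(x_n)_{n\in\mathbb Z}$ of reals (particle positions). The particle at $x_n$ is in equilibrium if the force from the left $\sum_{m<n}F(x_n-x_m)$ and the force from the right $\sum_{m>n}F(x_m-x_n)$ are both finite and equal. An equilibrium configuration is a configuration in which every particle is in equilibrium. It is trivial if it is an arithmetic progression, i.e. $x_{n+1}-x_n$ is constant. The numbers $x_{n+1}-x_n$ are called gaps. *)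

From Stdlib Require Import Reals ZArith.
Open Scope R_scope.

(* A force law: F : (0,oo) -> (0,oo) strictly decreasing.  F is a total
   function R -> R; only its values on (0,oo) matter. *)
Definition force_law (F : R -> R) : Prop :=
  (forall d, 0 < d -> 0 < F d) /\
  (forall d e, 0 < d -> d < e -> F e < F d).

Definition configuration (x : Z -> R) : Prop :=
  forall n : Z, x n < x (n + 1)%Z.

(* Force from the left on particle n: sum_{m<n} F(x n - x m)
   = sum_{j>=1} F(x n - x (n-j)); all terms positive, so the order of
   summation is irrelevant.  Similarly from the right. *)
Definition left_term (F : R -> R) (x : Z -> R) (n : Z) (j : nat) : R :=
  F (x n - x (n - Z.of_nat (S j))%Z).
Definition right_term (F : R -> R) (x : Z -> R) (n : Z) (j : nat) : R :=
  F (x (n + Z.of_nat (S j))%Z - x n).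

Definition in_equilibrium (F : R -> R) (x : Z -> R) (n : Z) : Prop :=
  exists L : R, infinite_sum (left_term F x n) L /\
                infinite_sum (right_term F x n) L.

Definition equilibrium_configuration (F : R -> R) (x : Z -> R) : Prop :=
  configuration x /\ forall n : Z, in_equilibrium F x n.

Definition gap (x : Z -> R) (n : Z) : R := x (n + 1)%Z - x n.

Definition trivial_configuration (x : Z -> R) : Prop :=
  forall n m : Z, gap x n = gap x m.

(** At a maximal gap [x(k+1) - x(k)], every particle to the right of [k+1]
    is at least as close to [k+1] as the corresponding particle is to [k], and
    every particle to the left of [k] is at least as close to [k] as the
    corresponding particle is to [k+1].  Hence, term by term,
    [R(k) <= R(k+1)] and [L(k+1) <= L(k)], and equilibrium closes the chain
    [R(k) <= R(k+1) = L(k+1) <= L(k) = R(k)].  Equal sums of dominated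
    series force equality of the terms, and strict monotonicity of [F] turns this
    into equality of all gaps with the gap at [k].  A minimal gap is handled
    by exchanging the roles of [k] and [k+1]. *)

From Stdlib Require Import Reals ZArith Lra Lia.
Open Scope R_scope.

Lemma infinite_sum_le (a b : nat -> R) (A B : R) :
  infinite_sum a A -> infinite_sum b B -> (forall j, a j <= b j) -> A <= B.
Proof.
  intros Ha Hb Hab.
  eapply Rle_cv_lim; [|exact Ha|exact Hb].
  intro n. apply sum_Rle. auto.
Qed.

Lemma infinite_sum_eq_of_le (a b : nat -> R) (A B : R) :
  infinite_sum a A -> infinite_sum b B ->
  (forall j, a j <= b j) -> B <= A -> forall j, a j = b j.
Proof.
  intros Ha Hb Hab HBA j.
  set (d := fun i => b i - a i).
  assert (Hd : forall i, 0 <= d i) by (intro i; specialize (Hab i); unfold d; lra).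
  assert (Hsum : Un_cv (sum_f_R0 d) (B - A)).
  { apply (Un_cv_ext (fun n => sum_f_R0 b n - sum_f_R0 a n)).
    - intro n. unfold d. symmetry. apply minus_sum.
    - apply CV_minus; [exact Hb|exact Ha]. }
  assert (Hdj : d j <= sum_f_R0 d j).
  { destruct j as [|j]; simpl; [lra|].
    pose proof (cond_pos_sum d j Hd). lra. }
  pose proof (sum_incr d j (B - A) Hsum Hd).
  assert (d j = b j - a j) by reflexivity.
  specialize (Hab j). lra.
Qed.

Lemma force_le_iff (F : R -> R) (d e : R) :
  force_law F -> 0 < d -> 0 < e -> F e <= F d <-> d <= e.
Proof.
  intros [_ HF] hd he. split; intro H.
  - destruct (Rle_lt_dec d e) as [|lt]; [assumption|].
    specialize (HF e d he lt). lra.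
  - destruct (Req_dec d e) as [->|ne]; [lra|].
    left. apply HF; lra.
Qed.

Lemma configuration_lt_add (x : Z -> R) (n : Z) (j : nat) :
  configuration x -> x n < x (n + Z.of_nat (S j))%Z.
Proof.
  intro Hx. induction j as [|j IH].
  - apply Hx.
  - replace (n + Z.of_nat (S (S j)))%Z with (n + Z.of_nat (S j) + 1)%Z by lia.
    specialize (Hx (n + Z.of_nat (S j))%Z). lra.
Qed.

Lemma configuration_lt_sub (x : Z -> R) (n : Z) (j : nat) :
  configuration x -> x (n - Z.of_nat (S j))%Z < x n.
Proof.
  intro Hx. pose proof (configuration_lt_add x (n - Z.of_nat (S j)) j Hx).
  replace (n - Z.of_nat (S j) + Z.of_nat (S j))%Z with n in H by lia. exact H.
Qed.

Section NeighbourComparison.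

Variables (F : R -> R) (x : Z -> R) (k : Z).
Hypotheses (HF : force_law F) (Hx : configuration x).

Lemma right_dist_succ (j : nat) :
  x (k + 1 + Z.of_nat (S j))%Z - x (k + 1)%Z =
  x (k + Z.of_nat (S j))%Z - x k + (gap x (k + Z.of_nat (S j)) - gap x k).
Proof.
  unfold gap.
  replace (k + 1 + Z.of_nat (S j))%Z with (k + Z.of_nat (S j) + 1)%Z by lia. lra.
Qed.

Lemma left_dist_succ (j : nat) :
  x (k + 1)%Z - x (k + 1 - Z.of_nat (S j))%Z =
  x k - x (k - Z.of_nat (S j))%Z + (gap x k - gap x (k - Z.of_nat (S j))).
Proof.
  unfold gap.
  replace (k + 1 - Z.of_nat (S j))%Z with (k - Z.of_nat (S j) + 1)%Z by lia. lra.
Qed.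

Let neighbour_dists_pos (j : nat) :
  0 < x (k + Z.of_nat (S j))%Z - x k /\
  0 < x (k + 1 + Z.of_nat (S j))%Z - x (k + 1)%Z /\
  0 < x k - x (k - Z.of_nat (S j))%Z /\
  0 < x (k + 1)%Z - x (k + 1 - Z.of_nat (S j))%Z.
Proof.
  pose proof (configuration_lt_add x k j Hx).
  pose proof (configuration_lt_add x (k + 1) j Hx).
  pose proof (configuration_lt_sub x k j Hx).
  pose proof (configuration_lt_sub x (k + 1) j Hx).
  lra.
Qed.

Lemma right_term_le_succ_iff (j : nat) :
  right_term F x k j <= right_term F x (k + 1) j <->
  gap x (k + Z.of_nat (S j)) <= gap x k.
Proof.
  pose proof (neighbour_dists_pos j). unfold right_term.
  rewrite (force_le_iff F _ _ HF), right_dist_succ by lra. split; lra.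
Qed.

Lemma right_term_succ_le_iff (j : nat) :
  right_term F x (k + 1) j <= right_term F x k j <->
  gap x k <= gap x (k + Z.of_nat (S j)).
Proof.
  pose proof (neighbour_dists_pos j). unfold right_term.
  rewrite (force_le_iff F _ _ HF), right_dist_succ by lra. split; lra.
Qed.

Lemma left_term_succ_le_iff (j : nat) :
  left_term F x (k + 1) j <= left_term F x k j <->
  gap x (k - Z.of_nat (S j)) <= gap x k.
Proof.
  pose proof (neighbour_dists_pos j). unfold left_term.
  rewrite (force_le_iff F _ _ HF), left_dist_succ by lra. split; lra.
Qed.

Lemma left_term_le_succ_iff (j : nat) :
  left_term F x k j <= left_term F x (k + 1) j <->
  gap x k <= gap x (k - Z.of_nat (S j)).
Proof.
  pose proof (neighbour_dists_pos j). unfold left_term.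
  rewrite (force_le_iff F _ _ HF), left_dist_succ by lra. split; lra.
Qed.

End NeighbourComparison.

Lemma equilibrium_squeeze (F : R -> R) (x : Z -> R) (p q : Z) :
  in_equilibrium F x p -> in_equilibrium F x q ->
  (forall j, right_term F x p j <= right_term F x q j) ->
  (forall j, left_term F x q j <= left_term F x p j) ->
  (forall j, right_term F x p j = right_term F x q j) /\
  (forall j, left_term F x q j = left_term F x p j).
Proof.
  intros [A [HLp HRp]] [B [HLq HRq]] HR HL.
  pose proof (infinite_sum_le _ _ _ _ HRp HRq HR).
  pose proof (infinite_sum_le _ _ _ _ HLq HLp HL).
  split.
  - exact (infinite_sum_eq_of_le _ _ _ _ HRp HRq HR ltac:(lra)).
  - exact (infinite_sum_eq_of_le _ _ _ _ HLq HLp HL ltac:(lra)).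
Qed.

Lemma trivial_configuration_of_gaps_eq (x : Z -> R) (k : Z) :
  (forall j : nat, gap x (k + Z.of_nat (S j)) = gap x k) ->
  (forall j : nat, gap x (k - Z.of_nat (S j)) = gap x k) ->
  trivial_configuration x.
Proof.
  intros Hright Hleft.
  assert (Hk : forall n, gap x n = gap x k).
  { intro n. destruct (Z.lt_trichotomy n k) as [lt|[->|gt]].
    - specialize (Hleft (Z.to_nat (k - n - 1))).
      replace (k - Z.of_nat (S (Z.to_nat (k - n - 1))))%Z with n in Hleft by lia.
      exact Hleft.
    - reflexivity.
    - specialize (Hright (Z.to_nat (n - k - 1))).
      replace (k + Z.of_nat (S (Z.to_nat (n - k - 1))))%Z with n in Hright by lia.
      exact Hright. }
  intros n m. rewrite (Hk n), (Hk m). reflexivity.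
Qed.

Theorem mainTheorem1 (F : R -> R) (x : Z -> R) :
  force_law F ->
  equilibrium_configuration F x ->
  ((exists k : Z, forall m : Z, gap x m <= gap x k) \/
   (exists k : Z, forall m : Z, gap x k <= gap x m)) ->
  trivial_configuration x.
Proof.
  intros HF [Hx Heq] [[k Hk]|[k Hk]].
  - destruct (equilibrium_squeeze F x k (k + 1) (Heq k) (Heq (k + 1)%Z))
      as [ER EL].
    + intro j. apply right_term_le_succ_iff, Hk; assumption.
    + intro j. apply left_term_succ_le_iff, Hk; assumption.
    + apply (trivial_configuration_of_gaps_eq x k); intro j;
        apply Rle_antisym; try apply Hk.
      * apply (right_term_succ_le_iff F x k HF Hx j). rewrite (ER j). apply Rle_refl.
      * apply (left_term_le_succ_iff F x k HF Hx j). rewrite (EL j). apply Rle_refl.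
  - destruct (equilibrium_squeeze F x (k + 1) k (Heq (k + 1)%Z) (Heq k))
      as [ER EL].
    + intro j. apply right_term_succ_le_iff, Hk; assumption.
    + intro j. apply left_term_le_succ_iff, Hk; assumption.
    + apply (trivial_configuration_of_gaps_eq x k); intro j;
        apply Rle_antisym; try apply Hk.
      * apply (right_term_le_succ_iff F x k HF Hx j). rewrite (ER j). apply Rle_refl.
      * apply (left_term_succ_le_iff F x k HF Hx j). rewrite (EL j). apply Rle_refl.
Qed.
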